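(* Let $\Phi:M_N(\mathbb{C})\to M_N(\mathbb{C})$ be a quantum operation with Kraus operators $\{E_i\}$ and Choi rank $D$. Let $\mathcal{C}$ be a quantum error correcting code for $\Phi$ with projection $P_{\mathcal C}$ and matrix $\Lambda=(\lambda_{ij})$ defined by $P_{\mathcal C}E_i^\dagger E_jP_{\mathcal C}=\lambda_{ij}P_{\mathcal C}$ for all $i,j$. Then the entropy $S(\Phi,\mathcal{C})=S(\Lambda)$ lies in the closed interval $[0,\log D]$. Moreover: (i) $S(\Phi,\mathcal{C})=0$ if and only if $\mathcal{C}$ is a unitarily correctable code for $\Phi$; (ii) $S(\Phi,\mathcal{C})=\log D$ if and only if $\mathcal{C}$ is a non-degenerate code for $\Phi$.
   Context: A quantum operation is a completely positive trace-preserving map $\Phi(\rho)=\sum_i E_i\rho E_i^\dagger$, $\sum_iE_i^\dagger E_i=\mathbb{1}$. The Choi rank of $\Phi$ is the rank of its Choi (dynamical) matrix, equivalently the minimal number of Kraus operators representing $\Phi$. A subspace $\mathcal C$ with orthogonal projection $P_{\mathcal C}$ is a (quantum error correcting) code for $\Phi$ if there are scalars $\lambda_{ij}$ with $P_{\mathcal C}E_i^\dagger E_jP_{\mathcal C}=\lambda_{ij}P_{\mathcal C}$ for all $i,j$; equivalently there is a quantum operation $\Psi$ with $\Psi\circ\Phi\circ\mathcal P_{\mathcal C}=\mathcal P_{\mathcal C}$, where $\mathcal P_{\mathcal C}(\rho)=P_{\mathcal C}\rho P_{\mathcal C}$. The matrix $\Lambda=(\lambda_{ij})$ is then a density matrix;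 changing the Kraus family changes $\Lambda$ by unitary conjugation (after padding with zeros), so its spectrum does not depend on the choice. The entropy of the code is $S(\Phi,\mathcal C):=S(\Lambda)=-\mathrm{Tr}\,\Lambda\log\Lambda$, with $\log$ the base-2 logarithm. $\mathcal{C}$ is unitarily correctable if there is a unitary $U$ such that $\Psi(\rho)=U\rho U^\dagger$ satisfies $\Psi\circ\Phi\circ\mathcal P_{\mathcal C}=\mathcal P_{\mathcal C}$. $\mathcal C$ is non-degenerate for $\Phi$ if $\operatorname{rank}\Lambda$ equals the Choi rank $D$ of $\Phi$ and all nonzero eigenvalues of $\Lambda$ are equal. *)

From HB Require Import structures.
From mathcomp Require Import all_boot all_order all_algebra.
From mathcomp Require Import complex.
From mathcomp Require mxtens.
From mathcomp Require Import reals exp.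
Set Implicit Arguments. Unset Strict Implicit. Unset Printing Implicit Defensive.
Import Order.TTheory GRing.Theory Num.Theory.
Local Open Scope ring_scope.
Local Open Scope sesquilinear_scope.

Section QEC.
Variable R : realType.
Local Notation C := R[i].

Definition log2 (x : R) : R := ln x / ln 2.

Definition trace_preserving N m (E : 'I_m -> 'M[C]_N) : Prop :=
  \sum_(i < m) (E i)^t* *m E i = 1%:M.

Definition qop N m (E : 'I_m -> 'M[C]_N) (rho : 'M[C]_N) : 'M[C]_N :=
  \sum_(i < m) E i *m rho *m (E i)^t*.

Definition choi_matrix N m (E : 'I_m -> 'M[C]_N) : 'M[C]_(N * N) :=
  \sum_(a < N) \sum_(b < N) mxtens.tensmx (delta_mx a b) (qop E (delta_mx a b)).

Definition choi_rank N m (E : 'I_m -> 'M[C]_N) : nat := \rank (choi_matrix E).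

Definition orth_proj N (P : 'M[C]_N) : Prop := P *m P = P /\ P^t* = P.

Definition KL_condition N m (E : 'I_m -> 'M[C]_N) (P : 'M[C]_N) (L : 'M[C]_m) : Prop :=
  forall i j, P *m ((E i)^t* *m E j) *m P = L i j *: P.

Definition eigvals n (A : 'M[C]_n) : 'rV[C]_n := spectral_diag A.

Definition vn_entropy n (A : 'M[C]_n) : R :=
  - \sum_(k < n) (let mu := complex.Re (eigvals A 0 k) in
                  if mu == 0 then 0 else mu * log2 mu).

Definition unitarily_correctable N m (E : 'I_m -> 'M[C]_N) (P : 'M[C]_N) : Prop :=
  exists U : 'M[C]_N, U \is unitarymx /\
    forall rho : 'M[C]_N, U *m qop E (P *m rho *m P) *m U^t* = P *m rho *m P.

Definition nondegenerate_code N m (E : 'I_m -> 'M[C]_N) (L : 'M[C]_m) : Prop :=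
  \rank L = choi_rank E /\
  forall k l : 'I_m, eigvals L 0 k != 0 -> eigvals L 0 l != 0 ->
    eigvals L 0 k = eigvals L 0 l.

End QEC.

(* Fix a nonzero vector [w] of the code.  The Knill-Laflamme condition makes
   [Lambda], up to the positive factor [|w|^2], the Gram matrix of the vectors
   [E_j w]; so [Lambda] is a density matrix whose rank is at most that of the
   matrix of the vectorised [E_j], i.e. the Choi rank [D].  The bounds
   [0 <= S <= log rank Lambda <= log D] are then Gibbs' inequality, with
   equality at the top exactly for [rank Lambda = D] and a uniform spectrum.
   [S = 0] means [Lambda = q^* q] has rank one; then every [E_j] acts on the
   code as [q_j V] for a single partial isometry [V] with [V^* V = P], which a
   unitary undoes.  Conversely a unitary recovery maps the Gram matrix of the
   [E_j w] onto that of [w] alone, which forces rank one. *)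

From HB Require Import structures.
From mathcomp Require Import all_boot all_order all_algebra.
From mathcomp Require Import complex.
From mathcomp Require mxtens.
From mathcomp Require Import reals exp.
From mathcomp Require Import zify ring.
Set Implicit Arguments.
Unset Strict Implicit.
Unset Printing Implicit Defensive.
Import Order.TTheory GRing.Theory Num.Theory.
Local Open Scope ring_scope.
Local Open Scope sesquilinear_scope.

Section ShannonEntropy.
Variable R : realType.

Lemma ln_le_subr1 (x : R) : 0 < x -> ln x <= x - 1.
Proof.
move=> x_gt0; have := expR_ge1Dx (x - 1); rewrite addrC subrK => le_x_exp.
by rewrite -(expRK (x - 1)) ler_ln ?posrE ?expR_gt0.
Qed.

Lemma ln_lt_subr1 (x : R) : 0 < x -> x != 1 -> ln x < x - 1.
Proof.
move=> x_gt0 x_neq1; have := @expR_gt1Dx R (x - 1).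
rewrite subr_eq0 x_neq1 addrC subrK => /(_ isT) lt_x_exp.
by rewrite -(expRK (x - 1)) ltr_ln ?posrE ?expR_gt0.
Qed.

Lemma ln2_gt0 : 0 < ln (2 : R).
Proof. by apply: ln_gt0; rewrite ltr1n. Qed.

Lemma ler_log2_nat (a b : nat) : (0 < a)%N -> (a <= b)%N ->
  log2 (a%:R : R) <= log2 b%:R.
Proof.
move=> a_gt0 le_ab; rewrite /log2 ler_pM2r ?invr_gt0 ?ln2_gt0 //.
by rewrite ler_ln ?ler_nat // posrE ltr0n // (leq_trans a_gt0).
Qed.

Lemma log2_nat_inj (a b : nat) : (0 < a)%N -> (0 < b)%N ->
  log2 (a%:R : R) = log2 b%:R -> a = b.
Proof.
move=> a_gt0 b_gt0; rewrite /log2 => /(congr1 ( *%R^~ (ln 2))).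
rewrite !mulfVK ?(gt_eqF ln2_gt0) // => /ln_inj.
by rewrite !posrE !ltr0n => /(_ a_gt0 b_gt0) /eqP; rewrite eqr_nat => /eqP.
Qed.

Variables (m : nat) (p : 'I_m -> R).
Hypothesis p_ge0 : forall k, 0 <= p k.
Hypothesis p_sum1 : \sum_k p k = 1.

Definition supp_size := #|[pred k | p k != 0]|.

Definition entropy := - \sum_k (if p k == 0 then 0 else p k * log2 (p k)).

Let xlnx k := if p k == 0 then 0 else p k * ln (p k).
Let r : R := supp_size%:R.

Lemma sum_supp (F : 'I_m -> R) :
  \sum_k (if p k == 0 then 0 else F k) = \sum_(k | p k != 0) F k.
Proof. by rewrite [RHS]big_mkcond; apply: eq_bigr => k _; case: (p k == 0). Qed.

Lemma sum_supp_p : \sum_(k | p k != 0) p k = 1.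
Proof. by rewrite -sum_supp -p_sum1; apply: eq_bigr => k _; case: eqP. Qed.

Lemma supp_size_gt0 : (0 < supp_size)%N.
Proof.
rewrite lt0n; apply: contra_eqN p_sum1 => /eqP/card0_eq supp0.
rewrite big1 1?eq_sym ?oner_eq0 // => k _.
by apply/eqP; move: (supp0 k); rewrite !inE => /negbFE.
Qed.

Lemma p_le1 k : p k <= 1.
Proof. by rewrite -p_sum1 (bigD1 k) //= lerDl sumr_ge0. Qed.

Lemma xlnx_le0 k : xlnx k <= 0.
Proof.
rewrite /xlnx; case: (p k == 0) => //.
by rewrite mulr_ge0_le0 ?ln_le0 ?p_le1.
Qed.

Lemma entropyE : entropy = - (\sum_k xlnx k) / ln 2.
Proof.
rewrite /entropy mulNr mulr_suml; congr (- _); apply: eq_bigr => k _.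
by rewrite /xlnx /log2; case: (p k == 0); rewrite ?mul0r // mulrA.
Qed.

(* Gibbs' inequality against the uniform distribution on the support, via
   [ln x <= x - 1] at [x = 1 / (r p_k)]. *)
Let gibbs_gap k := if p k == 0 then 0
  else p k * ((r * p k)^-1 - 1 - ln ((r * p k)^-1)).

Lemma gibbs_gap_ge0 k : 0 <= gibbs_gap k.
Proof.
rewrite /gibbs_gap; have [//|pk_neq0] := eqVneq (p k) 0.
have pk_gt0 : 0 < p k by rewrite lt_def pk_neq0 p_ge0.
have r_gt0 : 0 < r by rewrite ltr0n supp_size_gt0.
by rewrite mulr_ge0 // subr_ge0 ln_le_subr1 // invr_gt0 mulr_gt0.
Qed.

Lemma sum_gibbs_gap : \sum_k gibbs_gap k = ln r + \sum_k xlnx k.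
Proof.
have r_gt0 : 0 < r by rewrite ltr0n supp_size_gt0.
have gapE k : gibbs_gap k =
    (if p k == 0 then 0 else r^-1 - p k + ln r * p k) + xlnx k.
  rewrite /gibbs_gap /xlnx; have [|pk_neq0] := eqVneq (p k) 0.
    by rewrite addr0.
  have pk_gt0 : 0 < p k by rewrite lt_def pk_neq0 p_ge0.
  rewrite lnV ?lnM ?posrE ?mulr_gt0 //; field.
  by rewrite !gt_eqF.
rewrite (eq_bigr _ (fun k _ => gapE k)) big_split /= sum_supp !big_split /=.
rewrite sumrN -mulr_sumr sum_supp_p sumr_const -mulr_natl mulfV ?gt_eqF //.
by rewrite subrr add0r mulr1.
Qed.

Lemma gibbs_gap_eq0 k : p k != 0 -> (gibbs_gap k == 0) = (p k == r^-1).
Proof.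
move=> pk_neq0; have pk_gt0 : 0 < p k by rewrite lt_def pk_neq0 p_ge0.
have r_neq0 : r != 0 by rewrite pnatr_eq0 -lt0n supp_size_gt0.
have x_gt0 : 0 < (r * p k)^-1.
  by rewrite invr_gt0 mulr_gt0 // lt0r r_neq0 ler0n.
have -> : (p k == r^-1) = ((r * p k)^-1 == 1).
  rewrite invr_eq1; apply/eqP/eqP => [->|rp1]; first by rewrite mulfV.
  by rewrite -[p k](mulKf r_neq0) rp1 mulr1.
rewrite /gibbs_gap (negbTE pk_neq0) mulf_eq0 (negbTE pk_neq0) /= subr_eq0.
have [->|x_neq1] := eqVneq ((r * p k)^-1) 1; first by rewrite ln1 subrr eqxx.
by have := ln_lt_subr1 x_gt0 x_neq1; rewrite lt_def eq_sym => /andP[/negbTE].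
Qed.

Lemma entropy_ge0 : 0 <= entropy.
Proof.
rewrite entropyE divr_ge0 ?(ltW ln2_gt0) // oppr_ge0.
by apply: sumr_le0 => k _; apply: xlnx_le0.
Qed.

Lemma entropy_le_log2_supp : entropy <= log2 supp_size%:R.
Proof.
rewrite entropyE /log2 ler_pM2r ?invr_gt0 ?ln2_gt0 // lerNl -subr_ge0 opprK.
by rewrite addrC -sum_gibbs_gap sumr_ge0 // => k _; apply: gibbs_gap_ge0.
Qed.

Lemma entropy_eq_log2_supp : entropy = log2 supp_size%:R <->
  (forall k l, p k != 0 -> p l != 0 -> p k = p l).
Proof.
transitivity (\sum_k gibbs_gap k = 0).
  rewrite sum_gibbs_gap entropyE /log2; split => [|gap0].
    move/(congr1 ( *%R^~ (ln 2))); rewrite !divfK ?(gt_eqF ln2_gt0) // => <-.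
    by rewrite addNr.
  suff -> : ln r = - \sum_k xlnx k by [].
  by apply/eqP; rewrite -addr_eq0 gap0.
transitivity (forall k, p k != 0 -> p k = r^-1).
  split => [gap0 k pk_neq0 | uniform].
    have /eqP := psumr_eq0P (fun k _ => gibbs_gap_ge0 k) gap0 (i := k) isT.
    by rewrite gibbs_gap_eq0 // => /eqP.
  apply: big1 => k _; have [pk0|pk_neq0] := eqVneq (p k) 0.
    by rewrite /gibbs_gap pk0 eqxx.
  by apply/eqP; rewrite gibbs_gap_eq0 // uniform.
split => [uniform k l pk_neq0 pl_neq0 | const k pk_neq0].
  by rewrite (uniform k pk_neq0) (uniform l pl_neq0).
have r_neq0 : r != 0 by rewrite pnatr_eq0 -lt0n supp_size_gt0.
have := sum_supp_p; rewrite (eq_bigr (fun=> p k)) => [|l pl_neq0]; last exact: const.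
by rewrite sumr_const -mulr_natl => /(canRL (mulKf r_neq0)); rewrite mulr1.
Qed.

Lemma entropy_eq0 : entropy = 0 <-> supp_size = 1%N.
Proof.
split => [H0|supp1]; last first.
  apply/le_anti; rewrite entropy_ge0 andbT.
  by have := entropy_le_log2_supp; rewrite supp1 /log2 ln1 mul0r.
have xlnx0 k : xlnx k = 0.
  have sum0 : \sum_l - xlnx l = 0.
    move: H0; rewrite entropyE -sumrN => /eqP.
    by rewrite mulf_eq0 invr_eq0 (gt_eqF ln2_gt0) orbF => /eqP.
  have ge0 l : 0 <= - xlnx l by rewrite oppr_ge0 xlnx_le0.
  have /eqP := psumr_eq0P (fun l _ => ge0 l) sum0 (i := k) isT.
  by rewrite oppr_eq0 => /eqP.
have := sum_supp_p; rewrite (eq_bigr (fun=> 1)) => [|k pk_neq0].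
  by rewrite sumr_const => /eqP; rewrite pnatr_eq1 => /eqP.
have pk_gt0 : 0 < p k by rewrite lt_def pk_neq0 p_ge0.
have /eqP := xlnx0 k; rewrite /xlnx (negbTE pk_neq0) mulf_eq0 (negbTE pk_neq0).
by rewrite ln_eq0 // => /eqP.
Qed.

Lemma entropy_eq_log2 (D : nat) : (supp_size <= D)%N ->
  entropy = log2 D%:R <->
  supp_size = D /\ (forall k l, p k != 0 -> p l != 0 -> p k = p l).
Proof.
move=> le_supp_D; split => [H | [<- uniform]]; last exact/entropy_eq_log2_supp.
suff supp_D : supp_size = D.
  by split; last by apply/entropy_eq_log2_supp; rewrite supp_D.
have D_gt0 : (0 < D)%N := leq_trans supp_size_gt0 le_supp_D.
apply: log2_nat_inj supp_size_gt0 D_gt0 _; apply/le_anti.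
by rewrite ler_log2_nat ?supp_size_gt0 //= -H entropy_le_log2_supp.
Qed.

Lemma supp_size_eq1 : supp_size = 1%N -> exists k0, forall k, p k = (k == k0)%:R.
Proof.
move=> /mem_card1 [k0 supp_k0]; exists k0 => k.
have supp_pred1 k' : (p k' != 0) = (k' == k0) by have := supp_k0 k'; rewrite !inE.
have := sum_supp_p; rewrite (big_pred1 k0) // => pk0.
have [->|k_neq] := eqVneq k k0; first by rewrite pk0.
by apply/eqP; move: k_neq; rewrite -supp_pred1 negbK.
Qed.
End ShannonEntropy.

Lemma mxrank_diag_mx (F : fieldType) n (d : 'rV[F]_n) :
  \rank (diag_mx d) = #|[pred k | d 0 k != 0]|.
Proof.
rewrite -sum1_card big_mkcond /=.
elim: n d => [|n IHn] d; first by rewrite big_ord0 thinmx0 mxrank0.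
have := diag_mx_row (lsubmx (d : 'rV_(1 + n))) (rsubmx (d : 'rV_(1 + n))).
rewrite hsubmxK; change (diag_mx d) with (diag_mx (d : 'rV_(1 + n))) => ->.
rewrite (rank_diag_block_mx (diag_mx (lsubmx (d : 'rV_(1 + n))))).
rewrite IHn rank_rV big_ord_recl.
congr (_ + _)%N; last first.
  apply: eq_bigr => k _; rewrite !inE mxE.
  by congr (if d _ _ != _ then _ else _); apply: val_inj.
have -> : (diag_mx (lsubmx (d : 'rV_(1 + n))) == 0) =
          (lsubmx (d : 'rV_(1 + n)) 0 0 == 0).
  apply/eqP/eqP => [/matrixP/(_ 0 0)|d00]; first by rewrite !mxE eqxx mulr1n.
  by apply/matrixP => i j; move: d00; rewrite !ord1 !mxE eqxx mulr1n.
rewrite mxE inE /= (_ : lshift n 0 = ord0); last exact: val_inj.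
by case: (d 0 ord0 == 0).
Qed.

Lemma proj_range_neq0 (F : nzRingType) N (P : 'M[F]_N) :
  P *m P = P -> P != 0 -> exists2 w : 'cV[F]_N, P *m w = w & w != 0.
Proof.
move=> PP P_neq0.
have [[i j] /= Pij] : exists ij : 'I_N * 'I_N, P ij.1 ij.2 != 0.
  apply/existsP; apply: contraNT P_neq0 => /existsPn P0.
  by apply/eqP/matrixP => i j; have := P0 (i, j); rewrite mxE negbK => /eqP.
exists (col j P); first by rewrite colE mulmxA PP.
by apply: contra_neq Pij => /matrixP /(_ i 0); rewrite !mxE.
Qed.

Section Adjoint.
Variable C : numClosedFieldType.

Lemma trmxC0 m n : (0 : 'M[C]_(m, n))^t* = 0.
Proof. by rewrite trmx0 map_mx0. Qed.

Lemma trmxCD m n (A B : 'M[C]_(m, n)) : (A + B)^t* = A^t* + B^t*.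
Proof. by rewrite linearD map_mxD. Qed.

Lemma trmxCB m n (A B : 'M[C]_(m, n)) : (A - B)^t* = A^t* - B^t*.
Proof. by rewrite linearB map_mxB. Qed.

Lemma trmxCZ m n a (A : 'M[C]_(m, n)) : (a *: A)^t* = a^* *: A^t*.
Proof. by rewrite linearZ map_mxZ. Qed.

Lemma trmxC_mul m n p (A : 'M[C]_(m, n)) (B : 'M[C]_(n, p)) :
  (A *m B)^t* = B^t* *m A^t*.
Proof. by rewrite trmx_mul map_mxM. Qed.

Lemma trmxC_sum m n I (r : seq I) (P : pred I) (F : I -> 'M[C]_(m, n)) :
  (\sum_(i <- r | P i) F i)^t* = \sum_(i <- r | P i) (F i)^t*.
Proof. exact: (big_morph _ (@trmxCD m n) (@trmxC0 m n)). Qed.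

Lemma trmxC_mulmx_eq0 m n (M : 'M[C]_(m, n)) : M^t* *m M = 0 -> M = 0.
Proof.
move=> /matrixP MM; apply/matrixP => i j; move: (MM j j); rewrite !mxE => sum0.
have ge0 k : 0 <= (M^t*) j k * M k j by rewrite !mxE mulrC mul_conjC_ge0.
have := psumr_eq0P (fun k _ => ge0 k) sum0 (i := i) isT.
by rewrite !mxE mulrC => /eqP; rewrite mul_conjC_eq0 => /eqP.
Qed.

Lemma mulmx_trmxC_eq0 m n (M : 'M[C]_(m, n)) : M *m M^t* = 0 -> M = 0.
Proof.
rewrite -{1}[M]trmxCK => /trmxC_mulmx_eq0 /(congr1 (fun X => X^t*)).
by rewrite trmxCK trmxC0.
Qed.

Lemma mxrank_mulmx_trmxC m n (A : 'M[C]_(m, n)) : \rank (A *m A^t*) = \rank A.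
Proof.
apply/eqP; rewrite eqn_leq mxrankM_maxl /=.
set Z := kermx (A *m A^t*).
have ZA0 : Z *m A = 0.
  by apply: mulmx_trmxC_eq0; rewrite trmxC_mul mulmxA -(mulmxA Z) mulmx_ker mul0mx.
have : (Z <= kermx A)%MS by rewrite sub_kermx ZA0.
move/mxrankS; rewrite !mxrank_ker.
have := rank_leq_row A; have := rank_leq_row (A *m A^t*).
lia.
Qed.

Lemma mxrank_trmxC_mulmx m n (A : 'M[C]_(m, n)) : \rank (A^t* *m A) = \rank A.
Proof.
by rewrite -{2}[A]trmxCK mxrank_mulmx_trmxC mxrank_map mxrank_tr.
Qed.

Lemma cnorm2_gt0 n (w : 'cV[C]_n) : w != 0 -> 0 < (w^t* *m w) 0 0.
Proof.
move=> w_neq0; rewrite lt_def; apply/andP; split.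
  apply: contra w_neq0 => /eqP w0; apply/eqP/trmxC_mulmx_eq0.
  by apply/matrixP => i j; rewrite !ord1 w0 mxE.
by rewrite mxE sumr_ge0 // => k _; rewrite !mxE mulrC mul_conjC_ge0.
Qed.

Local Notation "B ^!" :=
  (orthomx Num.conj (mx_of_hermitian (hermitian1mx _)) B) : matrix_set_scope.

Lemma proj_compl_isometry N (P : 'M[C]_N) : P *m P = P -> P^t* = P ->
  exists2 B : 'M[C]_(N - \rank P, N), B *m B^t* = 1%:M & B^t* *m B = 1%:M - P.
Proof.
move=> PP Ph; set B := schmidt (row_base P); set B' := schmidt (row_base (P^!)%MS).
have /unitarymxP := schmidt_complete_unitarymx P.
rewrite tr_col_mx map_row_mx mul_col_row scalar_mx_block.
case/eq_block_mx => BB BB' B'B B'B'.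
have sum1 : B^t* *m B + B'^t* *m B' = 1%:M.
  have free : row_free ((col_mx B B')^t*).
    rewrite /row_free mxrank_map mxrank_tr mxrank_unitary ?add_rank_ortho //.
    exact: schmidt_complete_unitarymx.
  apply: (row_free_inj free); rewrite mul1mx tr_col_mx map_row_mx mul_mx_row.
  by rewrite !mulmxDl -!mulmxA BB BB' B'B B'B' !mulmx0 !mulmx1 addr0 add0r.
have BP : B *m P = B.
  have : (B <= P)%MS.
    by rewrite /B (eqmx_schmidt_free (row_base_free P)) eq_row_base.
  by case/submxP => D ->; rewrite -mulmxA PP.
have B'P : B' *m P = 0.
  have /orthomx1P : (B' <= P^!)%MS.
    by rewrite /B' (eqmx_schmidt_free (row_base_free _)) eq_row_base.
  by rewrite Ph.
have B_P : B^t* *m B = P.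
  by rewrite -[RHS]mul1mx -sum1 mulmxDl -!mulmxA BP B'P mulmx0 addr0.
rewrite B_P in sum1; rewrite -rank_ortho; exists B' => //.
by apply/eqP; rewrite eq_sym subr_eq addrC sum1.
Qed.

Lemma partial_isometry_proj N (V P : 'M[C]_N) :
  P *m P = P -> P^t* = P -> V^t* *m V = P -> V *m P = V.
Proof.
move=> PP Ph VV; apply/eqP; rewrite -subr_eq0; apply/eqP/trmxC_mulmx_eq0.
rewrite trmxCB trmxC_mul Ph mulmxDl !mulmxDr !mulmxN !mulNmx -!mulmxA VV.
by rewrite !mulmxA -(mulmxA P) VV !PP opprK subrr add0r addNr.
Qed.

(* [U = V^* + B1^* B2]: [V^*] inverts [V] on its range [Q = V V^*], and [B1^* B2]
   maps the orthogonal complement of [Q] onto that of [P]; both complements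
   have dimension [N - rank P]. *)
Lemma unitary_extension N (V P : 'M[C]_N) :
  P *m P = P -> P^t* = P -> V^t* *m V = P ->
  exists2 U, U \is unitarymx & U *m V = P.
Proof.
move=> PP Ph VV; have VP := partial_isometry_proj PP Ph VV.
set Q := V *m V^t*.
have QQ : Q *m Q = Q by rewrite /Q mulmxA -(mulmxA V) VV VP.
have Qh : Q^t* = Q by rewrite /Q trmxC_mul trmxCK.
have QV : Q *m V = V by rewrite /Q -mulmxA VV VP.
have rankQ : \rank Q = \rank P by rewrite mxrank_mulmx_trmxC -VV mxrank_trmxC_mulmx.
have [B1 B1B1 B1P] := proj_compl_isometry PP Ph.
have := proj_compl_isometry QQ Qh; rewrite rankQ => -[B2 B2B2 B2Q].
have B2V : B2 *m V = 0.
  have -> : V = (1%:M - B2^t* *m B2) *m V by rewrite B2Q subKr QV.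
  by rewrite mulmxA mulmxBr mulmx1 mulmxA B2B2 mul1mx subrr mul0mx.
have VB2 : V^t* *m B2^t* = 0 by rewrite -trmxC_mul B2V trmxC0.
exists (V^t* + B1^t* *m B2); last first.
  by rewrite mulmxDl VV -mulmxA B2V mulmx0 addr0.
apply/unitarymxP; rewrite trmxCD trmxC_mul !trmxCK mulmxDl !mulmxDr !mulmxA.
rewrite VV VB2 mul0mx -(mulmxA _ B2 V) B2V mulmx0 -(mulmxA _ B2) B2B2 mulmx1 B1P.
by rewrite addr0 add0r addrC subrK.
Qed.

Lemma eq_scale_of_gram m n (X V : 'M[C]_(m, n)) (G : 'M[C]_n) (a : C) :
  V^t* *m V = G -> X^t* *m V = a^* *: G -> X^t* *m X = (a * a^*) *: G ->
  X = a *: V.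
Proof.
move=> VV XV XX.
have VX : V^t* *m X = a *: G.
  rewrite -[V^t* *m X]trmxCK trmxC_mul trmxCK XV trmxCZ conjCK.
  by rewrite -VV trmxC_mul trmxCK.
apply/eqP; rewrite -subr_eq0; apply/eqP/trmxC_mulmx_eq0.
rewrite trmxCB trmxCZ mulmxDl !mulmxDr !mulmxN !mulNmx -!scalemxAl -!scalemxAr.
by rewrite XX XV VX VV !scalerA opprK subrr addNr addr0.
Qed.
End Adjoint.

Section SpectralDecomposition.
Variables (C : numClosedFieldType) (n : nat) (L : 'M[C]_n).
Hypothesis L_normal : L \is normalmx.
Local Notation Q := (spectralmx L).
Local Notation d := (spectral_diag L).

Lemma spectralmx_mulmx_trmxC : Q *m Q^t* = 1%:M.
Proof. exact/unitarymxP/spectral_unitarymx. Qed.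

Lemma spectral_decomposition : L = Q^t* *m diag_mx d *m Q.
Proof.
by rewrite -invmx_unitary ?spectral_unitarymx //; apply/orthomx_spectralP.
Qed.

Lemma diag_spectral_diag : diag_mx d = Q *m L *m Q^t*.
Proof.
rewrite [X in _ = _ *m X *m _]spectral_decomposition !mulmxA.
by rewrite spectralmx_mulmx_trmxC mul1mx -mulmxA spectralmx_mulmx_trmxC mulmx1.
Qed.

Lemma sum_spectral_diag : \sum_k d 0 k = \tr L.
Proof.
by rewrite -mxtrace_diag diag_spectral_diag mxtrace_mulC mulmxA
  (mulmx1C spectralmx_mulmx_trmxC) mul1mx.
Qed.

Lemma mxrank_spectral_diag : \rank L = #|[pred k | d 0 k != 0]|.
Proof.
have rank_conj m (A : 'M[C]_(m, n)) B (D : 'M[C]_(n, m)) :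
    (\rank (A *m B *m D) <= \rank B)%N.
  exact: leq_trans (mxrankM_maxl _ _) (mxrankM_maxr _ _).
rewrite -mxrank_diag_mx; apply/eqP; rewrite eqn_leq; apply/andP; split.
  by rewrite [X in (\rank X <= _)%N]spectral_decomposition; apply: rank_conj.
by rewrite diag_spectral_diag; apply: rank_conj.
Qed.

Lemma spectral_diag_delta k0 : d = delta_mx 0 k0 ->
  exists2 q : 'rV[C]_n, q *m q^t* = 1%:M & L = q^t* *m q.
Proof.
move=> d_delta; exists (delta_mx 0 k0 *m Q).
  rewrite trmxC_mul mulmxA -(mulmxA _ Q) spectralmx_mulmx_trmxC mulmx1.
  rewrite trmx_delta map_delta_mx mul_delta_mx.
  by apply/matrixP => i j; rewrite !ord1 !mxE !eqxx.
rewrite trmxC_mul trmx_delta map_delta_mx mulmxA -(mulmxA _ (delta_mx k0 0)).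
rewrite mul_delta_mx [LHS]spectral_decomposition d_delta; congr (_ *m _ *m _).
apply/matrixP => i j; rewrite !mxE eqxx /=.
have [<-|ij] := eqVneq i j; first by rewrite andbb mulr1n.
by rewrite mulr0n; case: (i =P k0) => [ik|//]; rewrite -ik eq_sym (negbTE ij).
Qed.
End SpectralDecomposition.

Section Gram.
Variables (C : numClosedFieldType) (m n : nat).
Variables (Y : 'M[C]_(m, n)) (s : C) (L : 'M[C]_n).
Hypotheses (s_gt0 : 0 < s) (YY : Y^t* *m Y = s *: L).

Lemma gram_hermitian : L^t* = L.
Proof.
have s_real : s^* = s by rewrite geC0_conj // ltW.
have : s *: L^t* = s *: L by rewrite -{1}s_real -trmxCZ -YY trmxC_mul trmxCK.
by move/eqP; rewrite -subr_eq0 -scalerBr scaler_eq0 (gt_eqF s_gt0) subr_eq0 => /eqP.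
Qed.

Lemma gram_normal : L \is normalmx.
Proof. by apply/normalmxP; rewrite gram_hermitian. Qed.

Lemma gram_spectral_diag_ge0 k : 0 <= spectral_diag L 0 k.
Proof.
set Z := Y *m (spectralmx L)^t*.
have sD : s *: diag_mx (spectral_diag L) = Z^t* *m Z.
  rewrite diag_spectral_diag ?gram_normal // scalemxAl scalemxAr -YY.
  by rewrite /Z trmxC_mul trmxCK !mulmxA.
rewrite -(pmulr_rge0 _ s_gt0).
have /matrixP/(_ k k) := sD.
rewrite [in X in X -> _]mxE [in X in X -> _]mxE eqxx mulr1n => ->.
rewrite mxE sumr_ge0 // => c _.
by rewrite !mxE mulrC mul_conjC_ge0.
Qed.
End Gram.

Section ChoiMatrix.
Variables (R : realType) (N m : nat) (E : 'I_m -> 'M[R[i]]_N).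

(* Column [i] is the vectorisation of the Kraus operator [E i]. *)
Definition choi_factor : 'M[R[i]]_(N * N, m) :=
  \matrix_(x, i) E i (mxtens.mxtens_unindex x).2 (mxtens.mxtens_unindex x).1.

Lemma qop_delta_mx a b c d : qop E (delta_mx a b) c d = \sum_i E i c a * (E i d b)^*.
Proof.
rewrite /qop summxE; apply: eq_bigr => i _.
rewrite -(mul_delta_mx (0 : 'I_1)) mulmxA -colE -mulmxA -rowE.
by rewrite !mxE big_ord1 !mxE.
Qed.

Lemma choi_matrixE : choi_matrix E = choi_factor *m choi_factor^t*.
Proof.
apply/matrixP => x y; rewrite /choi_matrix summxE.
set x1 := (mxtens.mxtens_unindex x).1; set x2 := (mxtens.mxtens_unindex x).2.
set y1 := (mxtens.mxtens_unindex y).1; set y2 := (mxtens.mxtens_unindex y).2.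
rewrite (bigD1 x1) //= [X in _ + X]big1 ?addr0 => [|a /negbTE ax1]; last first.
  rewrite summxE big1 // => b _; rewrite mxE -/x1 -/y1 -/x2 -/y2 mxE.
  by rewrite eq_sym ax1 mul0r.
rewrite summxE (bigD1 y1) //= [X in _ + X]big1 ?addr0 => [|b /negbTE by1]; last first.
  by rewrite mxE -/x1 -/y1 -/x2 -/y2 mxE (eq_sym y1) by1 andbF mul0r.
rewrite mxE -/x1 -/y1 -/x2 -/y2 mxE !eqxx mul1r qop_delta_mx mxE.
by apply: eq_bigr => i _; rewrite !mxE.
Qed.

Lemma choi_rankE : choi_rank E = \rank choi_factor.
Proof. by rewrite /choi_rank choi_matrixE mxrank_mulmx_trmxC. Qed.

Definition kraus_apply (w : 'cV[R[i]]_N) : 'M[R[i]]_(N, m) :=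
  \matrix_(c, j) (E j *m w) c 0.

Lemma qop_mulmx_trmxC w :
  qop E (w *m w^t*) = kraus_apply w *m (kraus_apply w)^t*.
Proof.
apply/matrixP => a b; rewrite /qop summxE mxE; apply: eq_bigr => j _.
by rewrite !mulmxA -(mulmxA (E j *m w)) -trmxC_mul [LHS]mxE big_ord1 !mxE.
Qed.

Lemma mxrank_kraus_apply w : (\rank (kraus_apply w) <= choi_rank E)%N.
Proof.
pose W : 'M[R[i]]_(N, N * N) := \matrix_(c, x)
  (if (mxtens.mxtens_unindex x).2 == c then w (mxtens.mxtens_unindex x).1 0 else 0).
suff -> : kraus_apply w = W *m choi_factor by rewrite choi_rankE mxrankM_maxr.
apply/matrixP => c j; transitivity (\sum_a \sum_b
    W c (mxtens.mxtens_index (a, b)) * choi_factor (mxtens.mxtens_index (a, b)) j).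
  rewrite mxE mxE; apply: eq_bigr => a _.
  rewrite (bigD1 c) //= big1 ?addr0 => [|b b_neq_c]; last first.
    by rewrite !mxE mxtens.mxtens_indexK /= (negbTE b_neq_c) mul0r.
  by rewrite !mxE mxtens.mxtens_indexK /= eqxx mulrC.
rewrite [RHS]mxE (reindex (@mxtens.mxtens_index N N)) /=; last first.
  by exists (@mxtens.mxtens_unindex N N) => x _;
    [exact: mxtens.mxtens_indexK | exact: mxtens.mxtens_unindexK].
by rewrite pair_bigA; apply: eq_bigr => -[a b] _.
Qed.
End ChoiMatrix.

Definition spectrum (R : realType) n (A : 'M[R[i]]_n) k : R :=
  complex.Re (eigvals A 0 k).

Lemma vn_entropyE (R : realType) n (A : 'M[R[i]]_n) :
  vn_entropy A = entropy (spectrum A).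
Proof. by []. Qed.

Section CorrectableCode.
Variables (R : realType) (N m : nat) (E : 'I_m -> 'M[R[i]]_N).
Variables (P : 'M[R[i]]_N) (L : 'M[R[i]]_m).
Hypotheses (PP : P *m P = P) (Ph : P^t* = P) (KL : KL_condition E P L).

Lemma KL_mxtrace : trace_preserving E -> P != 0 -> \tr L = 1.
Proof.
move=> tp P_neq0.
have : P *m (\sum_i (E i)^t* *m E i) *m P = \tr L *: P.
  by rewrite mulmx_sumr mulmx_suml scaler_suml; apply: eq_bigr => i _; apply: KL.
rewrite tp mulmx1 PP => /eqP; rewrite -subr_eq0 -{1}[P]scale1r -scalerBl.
by rewrite scaler_eq0 (negbTE P_neq0) orbF subr_eq0 eq_sym => /eqP.
Qed.

Section RangeVector.
Variable w : 'cV[R[i]]_N.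
Hypotheses (Pw : P *m w = w) (w_neq0 : w != 0).

Lemma trmxC_range_proj : w^t* *m P = w^t*.
Proof. by rewrite -Ph -trmxC_mul Pw. Qed.

Lemma gram_kraus_apply :
  (kraus_apply E w)^t* *m kraus_apply E w = (w^t* *m w) 0 0 *: L.
Proof.
apply/matrixP => i j.
have -> : (kraus_apply E w ^t* *m kraus_apply E w) i j
    = ((E i *m w)^t* *m (E j *m w)) 0 0.
  by rewrite !mxE; apply: eq_bigr => c _; rewrite !mxE.
have <- : w^t* *m (P *m ((E i)^t* *m E j) *m P) *m w = (E i *m w)^t* *m (E j *m w).
  by rewrite !mulmxA trmxC_range_proj -!mulmxA Pw trmxC_mul !mulmxA.
by rewrite KL -scalemxAr -scalemxAl trmxC_range_proj !mxE mulrC.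
Qed.

Lemma mxrank_KL : \rank L = \rank (kraus_apply E w).
Proof.
rewrite -(mxrank_scale_nz _ (lt0r_neq0 (cnorm2_gt0 w_neq0))) -gram_kraus_apply.
exact: mxrank_trmxC_mulmx.
Qed.

(* A unitary recovery maps the Gram matrix of the [E_j w] isometrically onto
   that of the single vector [w], which has rank at most one. *)
Lemma unitarily_correctable_mxrank_le1 :
  unitarily_correctable E P -> (\rank L <= 1)%N.
Proof.
case=> U [U_unitary correctU]; set Y := kraus_apply E w.
have UY : (U *m Y) *m (U *m Y)^t* = w *m w^t*.
  have PwwP : P *m (w *m w^t*) *m P = w *m w^t*.
    by rewrite mulmxA Pw -mulmxA trmxC_range_proj.
  have := correctU (w *m w^t*); rewrite PwwP qop_mulmx_trmxC.
  by rewrite trmxC_mul !mulmxA.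
have UtU : U^t* *m U = 1%:M by apply/mulmx1C/unitarymxP.
have YtY : Y^t* *m Y = (U *m Y)^t* *m (U *m Y).
  by rewrite trmxC_mul mulmxA -(mulmxA _ (U^t*)) UtU mulmx1.
rewrite mxrank_KL -mxrank_trmxC_mulmx YtY mxrank_trmxC_mulmx.
by rewrite -mxrank_mulmx_trmxC UY mxrank_mulmx_trmxC rank_leq_col.
Qed.
End RangeVector.

Section RankOne.
Variable q : 'rV[R[i]]_m.
Hypotheses (qq : q *m q^t* = 1%:M) (Lq : L = q^t* *m q).

Let Lij i j : L i j = (q 0 i)^* * q 0 j.
Proof. by rewrite Lq mxE big_ord1 !mxE. Qed.

Let sum_q : \sum_j q 0 j * (q 0 j)^* = 1.
Proof.
have /matrixP/(_ 0 0) := qq; rewrite !mxE eqxx mulr1n => <-.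
by apply: eq_bigr => j _; rewrite !mxE.
Qed.

(* The partial isometry is [V = (sum_j conj(q_j) E_j) P]. *)
Lemma KL_rank_one_factor :
  exists2 V, V^t* *m V = P & forall i, E i *m P = q 0 i *: V.
Proof.
set F := \sum_j (q 0 j)^* *: E j.
have gramF i : P *m (E i)^t* *m F *m P = (q 0 i)^* *: P.
  rewrite /F mulmx_sumr mulmx_suml.
  rewrite (eq_bigr (fun j => ((q 0 i)^* * (q 0 j * (q 0 j)^*)) *: P)).
    by rewrite -scaler_suml -mulr_sumr sum_q mulr1.
  move=> j _; rewrite -scalemxAr -scalemxAl -(mulmxA P) KL Lij scalerA.
  by congr (_ *: _); ring.
have FtE : F^t* = \sum_i q 0 i *: (E i)^t*.
  by rewrite trmxC_sum; apply: eq_bigr => i _; rewrite trmxCZ conjCK.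
clearbody F.
have VV : (F *m P)^t* *m (F *m P) = P.
  rewrite trmxC_mul Ph mulmxA FtE mulmx_sumr !mulmx_suml.
  rewrite (eq_bigr (fun i => (q 0 i * (q 0 i)^*) *: P)) => [|i _].
    by rewrite -scaler_suml sum_q scale1r.
  by rewrite -scalemxAr -!scalemxAl gramF scalerA.
exists (F *m P) => // i; apply: eq_scale_of_gram VV _ _.
  by rewrite trmxC_mul Ph !mulmxA gramF.
by rewrite trmxC_mul Ph mulmxA -(mulmxA P) KL Lij mulrC.
Qed.

Lemma KL_rank_one_unitarily_correctable : unitarily_correctable E P.
Proof.
have [V VV EP] := KL_rank_one_factor.
have [U U_unitary UV] := unitary_extension PP Ph VV.
exists U; split => // rho.
have -> : qop E (P *m rho *m P) = V *m rho *m V^t*.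
  rewrite /qop (eq_bigr (fun i => (q 0 i * (q 0 i)^*) *: (V *m rho *m V^t*))).
    by rewrite -scaler_suml sum_q scale1r.
  move=> i _; have -> : E i *m (P *m rho *m P) *m (E i)^t* =
                        (E i *m P) *m rho *m (E i *m P)^t*.
    by rewrite trmxC_mul Ph !mulmxA.
  by rewrite EP trmxCZ -!scalemxAl -scalemxAr scalerA.
by rewrite !mulmxA UV -[P *m rho *m V^t* *m U^t*]mulmxA -trmxC_mul UV Ph.
Qed.
End RankOne.
Section Spectrum.
Hypotheses (tp : trace_preserving E) (P_neq0 : P != 0).

Lemma KL_normal : L \is normalmx.
Proof.
have [w Pw w_neq0] := proj_range_neq0 PP P_neq0.
exact: gram_normal (cnorm2_gt0 w_neq0) (gram_kraus_apply Pw).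
Qed.

Lemma eigvals_KL k : eigvals L 0 k = ((spectrum L k)%:C)%C.
Proof.
have [w Pw w_neq0] := proj_range_neq0 PP P_neq0.
have := gram_spectral_diag_ge0 (cnorm2_gt0 w_neq0) (gram_kraus_apply Pw) k.
by move/ger0_Im => Im0; rewrite {1}[eigvals L 0 k]complexE Im0 mulr0 addr0.
Qed.

Lemma eigvals_KL_eq0 k : (eigvals L 0 k == 0) = (spectrum L k == 0).
Proof. by rewrite eigvals_KL (fmorph_eq0 (real_complex R)). Qed.

Lemma spectrum_KL_ge0 k : 0 <= spectrum L k.
Proof.
have [w Pw w_neq0] := proj_range_neq0 PP P_neq0.
rewrite -ler0c -eigvals_KL.
exact: gram_spectral_diag_ge0 (cnorm2_gt0 w_neq0) (gram_kraus_apply Pw) k.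
Qed.

Lemma sum_spectrum_KL : \sum_k spectrum L k = 1.
Proof.
apply: (@complexI R); rewrite rmorph_sum rmorph1 -(KL_mxtrace tp P_neq0).
by rewrite -(sum_spectral_diag KL_normal); apply: eq_bigr => k _; rewrite eigvals_KL.
Qed.

Lemma mxrank_KL_supp : \rank L = supp_size (spectrum L).
Proof.
rewrite (mxrank_spectral_diag KL_normal); apply: eq_card => k.
by rewrite !inE eigvals_KL_eq0.
Qed.

Lemma mxrank_KL_le_choi : (\rank L <= choi_rank E)%N.
Proof.
have [w Pw w_neq0] := proj_range_neq0 PP P_neq0.
by rewrite (mxrank_KL Pw w_neq0) mxrank_kraus_apply.
Qed.

Lemma unitarily_correctable_KLE : unitarily_correctable E P <-> \rank L = 1%N.
Proof.
have supp_gt0 := supp_size_gt0 sum_spectrum_KL.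
split => [corrU | ].
  have [w Pw w_neq0] := proj_range_neq0 PP P_neq0.
  apply/eqP; rewrite eqn_leq (unitarily_correctable_mxrank_le1 Pw w_neq0 corrU).
  by rewrite mxrank_KL_supp.
rewrite mxrank_KL_supp => /(supp_size_eq1 sum_spectrum_KL) [k0 spectrum_delta].
have [|q qq Lq] := spectral_diag_delta KL_normal (k0 := k0).
  apply/matrixP => i k; rewrite ord1 eigvals_KL spectrum_delta.
  by rewrite !mxE eqxx rmorph_nat.
exact: KL_rank_one_unitarily_correctable qq Lq.
Qed.

Lemma nondegenerate_codeE : nondegenerate_code E L <->
  \rank L = choi_rank E /\
  (forall k l, spectrum L k != 0 -> spectrum L l != 0 ->
               spectrum L k = spectrum L l).
Proof.
rewrite /nondegenerate_code; split => -[-> uniform]; split => // k l.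
all: rewrite ?eigvals_KL_eq0 => k_neq0 l_neq0.
  by apply: (@complexI R); rewrite -!eigvals_KL (uniform k l) ?eigvals_KL_eq0.
by rewrite !eigvals_KL (uniform k l k_neq0 l_neq0).
Qed.
End Spectrum.
End CorrectableCode.

Theorem theorem2p3 (R : realType) (N m : nat) (E : 'I_m -> 'M[R[i]]_N)
    (P : 'M[R[i]]_N) (L : 'M[R[i]]_m) :
  trace_preserving E -> orth_proj P -> P != 0 -> KL_condition E P L ->
  (0 <= vn_entropy L <= log2 (choi_rank E)%:R) /\
  (vn_entropy L = 0 <-> unitarily_correctable E P) /\
  (vn_entropy L = log2 (choi_rank E)%:R <-> nondegenerate_code E L).
Proof.
move=> tp [PP Ph] P_neq0 KL.
have p_ge0 := spectrum_KL_ge0 PP Ph KL P_neq0.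
have p_sum1 := sum_spectrum_KL PP Ph KL tp P_neq0.
have rankL := mxrank_KL_supp PP Ph KL P_neq0.
have le_supp_choi : (supp_size (spectrum L) <= choi_rank E)%N.
  by rewrite -rankL (mxrank_KL_le_choi PP Ph KL P_neq0).
rewrite vn_entropyE; split; [|split].
- rewrite entropy_ge0 //= (le_trans (entropy_le_log2_supp p_ge0 p_sum1)) //.
  by rewrite ler_log2_nat ?supp_size_gt0.
- by rewrite entropy_eq0 // -rankL (unitarily_correctable_KLE PP Ph KL tp P_neq0).
- by rewrite entropy_eq_log2 // -rankL (nondegenerate_codeE PP Ph KL P_neq0).
Qed.
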